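(* Let $n$ be odd and let $L=\bigoplus_{i\in\mathbb{Z}/n\mathbb{Z}}L_i$ be a $(\mathbb{Z}/n\mathbb{Z})$-graded Lie algebra over a field with $L_0=0$ that satisfies the selective metabelian condition. Let $a,b,c\in\mathbb{Z}/n\mathbb{Z}$ with the additive order of $a$ greater than $3$. Then $$\big[x_c,\,y_1,\,y_2,\,\dots,\,y_7\big]=0$$ for every $x_c\in L_c$ and all elements $y_1,\dots,y_7$ (not necessarily equal) each of the form $y_k=[v_k,w_k]$ with $v_k\in L_b$, $w_k\in L_{a-b}$.
   Context: A $(\mathbb{Z}/n\mathbb{Z})$-graded Lie algebra is $L=\bigoplus_{i=0}^{n-1}L_i$ with $[L_i,L_j]\subseteq L_{i+j \bmod n}$. Products $[y_1,\dots,y_s]$ are left-normed: $[\dots[[y_1,y_2],y_3],\dots,y_s]$. A sequence $(a_1,\dots,a_k)$ in $\mathbb{Z}/n\mathbb{Z}$ is $(-1)$-dependent if $t_1a_1+\dots+t_ka_k=0$ for some $t_i\in\{0,1\}$ not all zero, and $(-1)$-independent otherwise. $L$ satisfies the selective metabelian condition if $\big[[x_{d_1},x_{d_2}],[x_{d_3},x_{d_4}]\big]=0$ for all $x_{d_i}\in L_{d_i}$ whenever $(d_1,d_2,d_3,d_4)$ is $(-1)$-independent. *)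

From HB Require Import structures.
From mathcomp Require Import all_boot all_order all_algebra all_fingroup.
Set Implicit Arguments. Unset Strict Implicit. Unset Printing Implicit Defensive.
Import GRing.Theory.
Local Open Scope ring_scope.

Definition lie_bracket (K : fieldType) (L : lmodType K) (br : L -> L -> L) :=
  [/\ (forall z, linear (br^~ z)),
      (forall z, linear (br z)),
      (forall x, br x x = 0) &
      (forall x y z, br (br x y) z + br (br y z) x + br (br z x) y = 0)].

(* Additive order of an element of Z/nZ (n = m.+1), i.e. the order of a in
   the additive group 'I_m.+1 (whose canonical finGroupType law is +). *)
Definition add_order (m : nat) (a : 'I_m.+1) : nat := #[a]%g.

Definition graded (K : fieldType) (L : lmodType K) (br : L -> L -> L)
  (m : nat) (Lg : 'I_m.+1 -> {pred L}) :=
  [/\ (forall i, 0 \in Lg i),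
      (forall i k x y, x \in Lg i -> y \in Lg i -> k *: x + y \in Lg i),
      (forall x : L, exists xs : 'I_m.+1 -> L,
          (forall i, xs i \in Lg i) /\ x = \sum_i xs i),
      (forall xs : 'I_m.+1 -> L, (forall i, xs i \in Lg i) ->
          \sum_i xs i = 0 -> forall i, xs i = 0) &
      (forall i j x y, x \in Lg i -> y \in Lg j -> br x y \in Lg (i + j))].

(* (-1)-dependence of a finite sequence in Z/nZ: some nonempty
   subfamily (selected by t_i in {0,1}, not all zero) sums to 0. *)
Definition minus1_dep (m : nat) (s : seq 'I_m.+1) : Prop :=
  exists t : bitseq, [/\ size t = size s, has id t & \sum_(x <- mask t s) x = 0].

Definition selective_metabelian (K : fieldType) (L : lmodType K)
  (br : L -> L -> L) (m : nat) (Lg : 'I_m.+1 -> {pred L}) :=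
  forall d1 d2 d3 d4 : 'I_m.+1, ~ minus1_dep [:: d1; d2; d3; d4] ->
  forall x1 x2 x3 x4, x1 \in Lg d1 -> x2 \in Lg d2 -> x3 \in Lg d3 ->
    x4 \in Lg d4 -> br (br x1 x2) (br x3 x4) = 0.

Definition lnprod (T : Type) (br : T -> T -> T) (x : T) (ys : seq T) :=
  foldl br x ys.

From HB Require Import structures.
From mathcomp Require Import all_boot all_order all_algebra all_fingroup cyclic.
From mathcomp Require Import ring zify.
Set Implicit Arguments. Unset Strict Implicit. Unset Printing Implicit Defensive.
Import GRing.Theory.
Local Open Scope ring_scope.

(* Write u_k = [x, y_1, ..., y_k] in L_(c + k a); once some u_k vanishes so
   does u_7, and if some c + k a (k <= 6) is 0 then u_k lies in L_0 = 0.
   Otherwise u_(j+2) = [[u_j, y_(j+1)], [v, w]] vanishes by the selective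
   metabelian condition as soon as (c + j a, a, b, a - b) is (-1)-independent.
   Since the order of a is odd and > 3, hence >= 5, the shifts c + b + k a
   (and likewise c + (a - b) + k a) vanish for at most one k in a window of
   five consecutive k, so such a j <= 4 exists unless b or a - b is 0 or -a.
   If b or a - b is 0, every y_k is 0.  When b = -a (or a - b = -a), the
   Jacobi identity rewrites u_4 through products of degrees
   (c + k a, 2a, -a, 2a), which are independent. *)

Section LeftNormed.
Variables (T : Type) (br : T -> T -> T).

Lemma lnprod_cat x s t : lnprod br x (s ++ t) = lnprod br (lnprod br x s) t.
Proof. exact: foldl_cat. Qed.

Lemma lnprod_take2 x0 x s j : (j.+1 < size s)%N ->
  lnprod br x (take j.+2 s) =
  br (br (lnprod br x (take j s)) (nth x0 s j)) (nth x0 s j.+1).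
Proof.
by move=> lt_j; rewrite (take_nth x0 lt_j) (take_nth x0 (ltnW lt_j)) /lnprod !foldl_rcons.
Qed.

End LeftNormed.

Section LieBracket.
Variables (K : fieldType) (L : lmodType K) (br : L -> L -> L).
Hypothesis br_lie : lie_bracket br.

Lemma brDl u v z : br (u + v) z = br u z + br v z.
Proof. by case: br_lie => lin _ _ _; have := lin z 1 u v; rewrite !scale1r. Qed.

Lemma brDr z u v : br z (u + v) = br z u + br z v.
Proof. by case: br_lie => _ lin _ _; have := lin z 1 u v; rewrite !scale1r. Qed.

Lemma br0l z : br 0 z = 0.
Proof. by apply/(addrI (br 0 z)); rewrite -brDl !addr0. Qed.

Lemma brNl u z : br (- u) z = - br u z.
Proof. by apply/eqP; rewrite -addr_eq0 -brDl addNr br0l. Qed.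

Lemma brBl u v z : br (u - v) z = br u z - br v z.
Proof. by rewrite brDl brNl. Qed.

Lemma br_anticomm u v : br u v = - br v u.
Proof.
case: br_lie => _ _ alt _; apply/eqP; rewrite -addr_eq0.
by have := alt (u + v); rewrite brDl !brDr !alt add0r addr0 => ->.
Qed.

Lemma br0r z : br z 0 = 0.
Proof. by rewrite br_anticomm br0l oppr0. Qed.

Lemma jacobi_r u v w : br u (br v w) = br (br u v) w - br (br u w) v.
Proof.
case: br_lie => _ _ _ /(_ u v w); rewrite [br (br v w) u]br_anticomm [br w u]br_anticomm brNl.
by move/eqP; rewrite addrAC subr_eq0 => /eqP.
Qed.

Lemma jacobi_swap u v w : br (br u v) w = br (br u w) v + br u (br v w).
Proof. by rewrite jacobi_r addrC subrK. Qed.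

Lemma lnprod0 s : lnprod br 0 s = 0.
Proof. by elim: s => //= y s; rewrite br0l. Qed.

Lemma lnprod_take_eq0 k x s : lnprod br x (take k s) = 0 -> lnprod br x s = 0.
Proof. by rewrite -{2}(cat_take_drop k s) lnprod_cat => ->; apply: lnprod0. Qed.

End LieBracket.

Lemma mulrn_neq0_small m (a : 'I_m.+1) : odd m.+1 -> (3 < add_order a)%N ->
  forall k, (0 < k < 5)%N -> a *+ k != 0.
Proof.
move=> odd_n ord_a k /andP[k_gt0 k_lt5]; apply/eqP => ak0.
have dvd_k : (add_order a %| k)%N.
  by rewrite order_dvdn; apply/eqP; rewrite Zp_expg -Zp_mulrn ak0.
have odd_a : odd (add_order a).
  by apply: dvdn_odd odd_n; have := order_dvdG (in_setT a); rewrite cardsT card_ord.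
have : add_order a = 4%N by have := dvdn_leq k_gt0 dvd_k; lia.
by move=> ord_a4; rewrite ord_a4 in odd_a.
Qed.

(* P and Q hold at no two points at distance <= 4, so each spoils at most two
   of the five windows. *)
Lemma free_window (P Q : nat -> bool) :
  (forall i k, (i < k <= minn (i + 4) 5)%N -> ~~ (P i && P k)) ->
  (forall i k, (i < k <= minn (i + 4) 5)%N -> ~~ (Q i && Q k)) ->
  exists2 j, (j <= 4)%N & ~~ [|| P j, P j.+1, Q j | Q j.+1].
Proof.
have close_pairs R : (forall i k, (i < k <= minn (i + 4) 5)%N -> ~~ (R i && R k)) ->
    all (fun ik => ~~ (R ik.1 && R ik.2))
      [seq (i, k) | i <- iota 0 6, k <- iota i.+1 (minn 4 (5 - i))].
  move=> sparse_R; apply/allP => _ /allpairsPdep[i [k [+ + ->]]].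
  by rewrite !mem_iota => ? ? /=; apply: sparse_R; lia.
move=> /close_pairs sparse_P /close_pairs sparse_Q.
suff /hasP[j]: has (fun j => ~~ [|| P j, P j.+1, Q j | Q j.+1]) (iota 0 5).
  by rewrite mem_iota => /andP[_ lt_j5]; exists j.
move: sparse_P sparse_Q => /=.
by case: (P 0); case: (P 1); case: (P 2); case: (P 3); case: (P 4); case: (P 5) => //= _;
  case: (Q 0); case: (Q 1); case: (Q 2); case: (Q 3); case: (Q 4); case: (Q 5).
Qed.

Lemma free_window_mulrn (G : zmodType) (a p q : G) :
  (forall k, (0 < k < 5)%N -> a *+ k != 0) ->
  exists2 j, (j <= 4)%N &
    [&& p + a *+ j != 0, p + a *+ j.+1 != 0, q + a *+ j != 0 & q + a *+ j.+1 != 0].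
Proof.
move=> a_small.
have sparse r i k : (i < k <= minn (i + 4) 5)%N ->
    ~~ ((r + a *+ i == 0) && (r + a *+ k == 0)).
  move=> lt_ik; apply/andP => -[/eqP ri /eqP rk].
  have /eqP[] := a_small (k - i)%N ltac:(lia).
  by rewrite -[k](subnKC (ltnW (proj1 (andP lt_ik)))) mulrnDr addrA ri add0r in rk.
have [j le_j4] := free_window (sparse p) (sparse q).
by rewrite !negb_or => /and4P[]; exists j => //; apply/and4P.
Qed.

Lemma minus1_indep4 m (d1 d2 d3 d4 : 'I_m.+1) :
  d1 != 0 -> d2 != 0 -> d3 != 0 -> d4 != 0 ->
  d1 + d2 != 0 -> d1 + d3 != 0 -> d1 + d4 != 0 -> d2 + d3 != 0 ->
  d2 + d4 != 0 -> d3 + d4 != 0 -> d1 + (d2 + d3) != 0 ->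
  d1 + (d2 + d4) != 0 -> d1 + (d3 + d4) != 0 -> d2 + (d3 + d4) != 0 ->
  d1 + (d2 + (d3 + d4)) != 0 -> ~ minus1_dep [:: d1; d2; d3; d4].
Proof.
move=> *; case=> t [size_t has_t]; case: t size_t has_t => [|t1 [|t2 [|t3 [|t4 []]]]] //= _.
by case: t1; case: t2; case: t3; case: t4 => //= _;
  rewrite !big_cons big_nil ?addr0 => /eqP; apply/negP.
Qed.

(* Degrees below live in 'I_m.+2, a commutative ring (unlike 'I_m.+1 for
   arbitrary m), so that [ring] can match a subsum with a hypothesis. *)
Ltac nonzero_by_hyp :=
  match goal with
  | H : is_true (?F != 0) |- is_true (?E != 0) =>
      first [ exact H
            | rewrite (_ : E = F); [exact: H | ring]
            | rewrite (_ : E = - F) ?oppr_eq0; [exact: H | ring] ]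
  end.

Section Graded.
Variables (K : fieldType) (L : lmodType K) (br : L -> L -> L).
Variables (m : nat) (Lg : 'I_m.+2 -> {pred L}).
Hypotheses (br_lie : lie_bracket br) (Lg_graded : graded br Lg).
Hypotheses (Lg0 : forall x, x \in Lg 0 -> x = 0) (Lg_sm : selective_metabelian br Lg).

Lemma graded_opp i x : x \in Lg i -> - x \in Lg i.
Proof.
case: Lg_graded => mem0 lin _ _ _ x_i.
by have := lin i (-1) x 0 x_i (mem0 i); rewrite scaleN1r addr0.
Qed.

Lemma graded_br i j x y : x \in Lg i -> y \in Lg j -> br x y \in Lg (i + j).
Proof. by case: Lg_graded => _ _ _ _; apply. Qed.

Lemma lnprod_mem a c x s :
  x \in Lg c -> {subset s <= Lg a} -> lnprod br x s \in Lg (c + a *+ size s).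
Proof.
elim: s c x => [|y s IHs] c x x_c s_a /=; first by rewrite addr0.
rewrite mulrS addrA; apply: IHs; first exact: graded_br x_c (s_a _ (mem_head _ _)).
by move=> z z_s; apply: s_a; rewrite inE z_s orbT.
Qed.

Definition bracket_in i j y := exists v w, [/\ v \in Lg i, w \in Lg j & y = br v w].

Lemma bracket_in_mem i j y : bracket_in i j y -> y \in Lg (i + j).
Proof. by case=> v [w [v_i w_j ->]]; apply: graded_br. Qed.

Lemma bracket_inC i j y : bracket_in i j y -> bracket_in j i y.
Proof.
case=> v [w [v_i w_j ->]]; exists (- w), v; split=> //; first exact: graded_opp.
by rewrite (brNl br_lie) -(br_anticomm br_lie).
Qed.

Lemma bracket_in0 j y : bracket_in 0 j y -> y = 0.
Proof. by case=> v [w [/Lg0 -> _ ->]]; apply: (br0l br_lie). Qed.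

Lemma br_bracket_eq0 d1 d2 d3 d4 x1 x2 y :
  x1 \in Lg d1 -> x2 \in Lg d2 -> bracket_in d3 d4 y ->
  ~ minus1_dep [:: d1; d2; d3; d4] -> br (br x1 x2) y = 0.
Proof.
by move=> x1_d1 x2_d2 [v [w [v_d3 w_d4 ->]]] indep; apply: Lg_sm x1_d1 x2_d2 v_d3 w_d4.
Qed.

Lemma br_br_neg_double_eq0 a e u y1 y2 :
  (forall k, (0 < k < 5)%N -> a *+ k != 0) ->
  (forall k, (k < 7)%N -> e + a *+ k != 0) ->
  u \in Lg (e + a *+ 2) ->
  bracket_in (- a) (a *+ 2) y1 -> bracket_in (- a) (a *+ 2) y2 ->
  br (br u y1) y2 = 0.
Proof.
move=> a_small e_path u_deg [v1 [w1 [v1_deg w1_deg ->]]] y2_br.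
move: (a_small 1%N isT) (a_small 2%N isT) (a_small 3%N isT) (a_small 4%N isT).
move: (e_path 0%N isT) (e_path 1%N isT) (e_path 2%N isT) (e_path 3%N isT).
move: (e_path 4%N isT) (e_path 5%N isT) (e_path 6%N isT) => * {a_small e_path}.
have v1y2_0 : br v1 y2 = 0.
  apply: Lg0; have := graded_br v1_deg (bracket_in_mem y2_br).
  by rewrite (_ : - a + (- a + a *+ 2) = 0) //; ring.
rewrite (jacobi_r br_lie) (brBl br_lie) [br (br (br u w1) v1) y2](jacobi_swap br_lie).
rewrite v1y2_0 (br0r br_lie) addr0.
rewrite (br_bracket_eq0 (graded_br u_deg v1_deg) w1_deg y2_br); last first.
  by apply: minus1_indep4; nonzero_by_hyp.
rewrite (br_bracket_eq0 u_deg w1_deg y2_br); last first.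
  by apply: minus1_indep4; nonzero_by_hyp.
by rewrite (br0l br_lie) subr0.
Qed.

Section Chain.
Variables (a b c : 'I_m.+2) (x : L) (ys : seq L).
Hypotheses (x_deg : x \in Lg c) (ys_size : size ys = 7%N).
Hypothesis ys_br : forall y, y \in ys -> bracket_in b (a - b) y.

Lemma ys_deg : {subset ys <= Lg a}.
Proof. by move=> y /ys_br /bracket_in_mem; rewrite subrKC. Qed.

Lemma nth_ys_br j : (j < 7)%N -> bracket_in b (a - b) (nth 0 ys j).
Proof. by move=> lt_j7; apply/ys_br/mem_nth; rewrite ys_size. Qed.

Lemma lnprod_take_mem k : (k <= 7)%N -> lnprod br x (take k ys) \in Lg (c + a *+ k).
Proof.
rewrite -ys_size => le_k; rewrite -[in a *+ k](size_takel le_k).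
by apply: lnprod_mem x_deg _ => y /mem_take; apply: ys_deg.
Qed.

Lemma lnprod_eq0_zero_degree : b = 0 -> lnprod br x ys = 0.
Proof.
move=> b0; apply: (lnprod_take_eq0 br_lie (k := 1)); rewrite (take_nth 0) ?ys_size //.
rewrite /lnprod foldl_rcons /=.
by have := nth_ys_br (isT : 0 < 7)%N; rewrite b0 => /bracket_in0 ->; apply: (br0r br_lie).
Qed.

Hypothesis a_small : forall k, (0 < k < 5)%N -> a *+ k != 0.
Hypothesis c_path : forall k, (k < 7)%N -> c + a *+ k != 0.

Lemma lnprod_eq0_neg_degree : a + b = 0 -> lnprod br x ys = 0.
Proof.
move=> ab0; have b_neg : b = - a by apply/eqP; rewrite -addr_eq0 addrC ab0.
have ab_double : a - b = a *+ 2 by rewrite b_neg opprK mulr2n.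
apply: (lnprod_take_eq0 br_lie (k := 4)); rewrite (lnprod_take2 br 0) ?ys_size //.
apply: br_br_neg_double_eq0 a_small c_path (lnprod_take_mem _) _ _ => //;
  by rewrite -b_neg -ab_double; apply: nth_ys_br.
Qed.

Lemma lnprod_eq0_generic :
  b != 0 -> a - b != 0 -> a + b != 0 -> a + (a - b) != 0 -> lnprod br x ys = 0.
Proof.
move=> *; have [j le_j4 /and4P[*]] := free_window_mulrn (c + b) (c + (a - b)) a_small.
have lt_j2 : (j.+2 < 7)%N := le_j4.
have lt_j1 := ltnW lt_j2; have lt_j := ltnW lt_j1.
move: (@a_small 1%N isT) (@a_small 2%N isT) (c_path lt_j) (c_path lt_j1) (c_path lt_j2) => *.
have ys_j : ys`_j \in Lg a by apply: ys_deg; rewrite mem_nth ?ys_size.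
apply: (lnprod_take_eq0 br_lie (k := j.+2)); rewrite (lnprod_take2 br 0) ?ys_size //.
apply: br_bracket_eq0 (lnprod_take_mem (ltnW lt_j)) ys_j (nth_ys_br lt_j1) _.
by apply: minus1_indep4; nonzero_by_hyp.
Qed.

End Chain.

Lemma lnprod_brackets_eq0 a b c x ys :
  (forall k, (0 < k < 5)%N -> a *+ k != 0) ->
  x \in Lg c -> size ys = 7%N -> (forall y, y \in ys -> bracket_in b (a - b) y) ->
  lnprod br x ys = 0.
Proof.
move=> a_small x_deg ys_size ys_br.
have ys_br' y : y \in ys -> bracket_in (a - b) (a - (a - b)) y.
  by rewrite subKr => /ys_br /bracket_inC.
case: (boolP [exists k : 'I_7, c + a *+ k == 0]) => [/existsP[k /eqP c_k] | /existsPn c_path].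
  apply: (lnprod_take_eq0 br_lie (k := k)); apply: Lg0; rewrite -c_k.
  exact: lnprod_take_mem x_deg ys_size ys_br _ (ltnW (ltn_ord k)).
have {}c_path k : (k < 7)%N -> c + a *+ k != 0 by move=> lt_k7; apply: c_path (Ordinal lt_k7).
have [b0 | b_nz] := eqVneq b 0; first exact: lnprod_eq0_zero_degree ys_size ys_br b0.
have [ab0 | ab_nz] := eqVneq (a - b) 0.
  exact: lnprod_eq0_zero_degree ys_size ys_br' ab0.
have [abp0 | abp_nz] := eqVneq (a + b) 0.
  exact: lnprod_eq0_neg_degree x_deg ys_size ys_br a_small c_path abp0.
have [abm0 | abm_nz] := eqVneq (a + (a - b)) 0.
  exact: lnprod_eq0_neg_degree x_deg ys_size ys_br' a_small c_path abm0.
exact: lnprod_eq0_generic x_deg ys_size ys_br a_small c_path b_nz ab_nz abp_nz abm_nz.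
Qed.

End Graded.

Theorem lemma2 (K : fieldType) (L : lmodType K) (br : L -> L -> L)
  (m : nat) (Lg : 'I_m.+1 -> {pred L}) :
  odd m.+1 ->
  lie_bracket br ->
  graded br Lg ->
  (forall x, x \in Lg 0 -> x = 0) ->
  selective_metabelian br Lg ->
  forall a b c : 'I_m.+1, (3 < add_order a)%N ->
  forall (x : L) (v w : 'I_7 -> L),
    x \in Lg c ->
    (forall k, v k \in Lg b) ->
    (forall k, w k \in Lg (a - b)) ->
    lnprod br x [seq br (v k) (w k) | k <- enum 'I_7] = 0.
Proof.
move=> odd_n br_lie Lg_graded Lg0 Lg_sm a b c ord_a x v w x_deg v_deg w_deg.
have a_small := mulrn_neq0_small odd_n ord_a.
case: m Lg a b c Lg_graded Lg0 Lg_sm x_deg v_deg w_deg a_small {odd_n ord_a}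
  => [|m] Lg a b c Lg_graded Lg0 Lg_sm x_deg v_deg w_deg a_small.
  by have := a_small 1%N isT; rewrite (ord1 a).
apply: (lnprod_brackets_eq0 br_lie Lg_graded Lg0 Lg_sm a_small x_deg).
  by rewrite size_map size_enum_ord.
by move=> _ /mapP[k _ ->]; exists (v k), (w k).
Qed.
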